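(* Let $X$ be a regular one-dimensional generalised diffusion on an interval $I$ with speed measure $m$ and scale function $s$, fix $\rho>0$ and a parameter $\theta$, and write $U(x)=U(x,\theta)=G(x,\theta)-R(x,\theta)$. Let $\Delta_-=\arg\max_{s\in\mathrm{int}(I)}[U(s)/\phi(s)]$ and $\Delta_+=\arg\max_{s\in\mathrm{int}(I)}[U(s)/\varphi(s)]$. If $x\in\Delta_+$ and $y\in\Delta_-$ then $x\le y$.
   Context: $\mathrm{int}(I)$ denotes the interior of $I$ together with its accessible boundary points. Standing boundary assumption: either both endpoints of $I$ are non-reflecting (absorbing or killing), or $X$ starts at a reflecting endpoint and the other endpoint is non-reflecting. $\varphi$ and $\phi$ are respectively the strictly increasing and strictly decreasing positive solutions of $\frac12\frac{d}{dm}\frac{d}{ds}f=\rho f$ (with the boundary conditions of $X$), normalised to equal $1$ at the starting point $X_0$; thus $\mathbb{E}_x[e^{-\rho H_y}]$ equals $\varphi(x)/\varphi(y)$ for $x\le y$ and $\phi(x)/\phi(y)$ for $x\ge y$, where $H_y=\inf\{t:X_t=y\}$. $G$ is a terminal reward, $c$ a running reward with $\mathbb{E}_x[\int_0^\infty e^{-\rho t}|c(X_t,\theta)|dt]<\infty$, and $R(x,\theta)=\mathbb{E}_x[\int_0^\infty e^{-\rho t}c(X_t,\theta)dt]$. Standing assumption: there is $\hat x\in\mathrm{int}(I)$ with $U(\hat x,\theta)>0$. *)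

From mathcomp Require Import all_boot all_order all_algebra.
From mathcomp Require Import boolp classical_sets reals.
Set Implicit Arguments. Unset Strict Implicit. Unset Printing Implicit Defensive.
Import Order.TTheory GRing.Theory Num.Theory.
Local Open Scope ring_scope.
Local Open Scope classical_set_scope.

Definition interval_set (R : realType) (J : set R) : Prop :=
  forall a b c : R, J a -> J c -> a <= b -> b <= c -> J b.

Definition argmax_on (R : realType) (D : set R) (f : R -> R) : set R :=
  [set s | D s /\ forall t, D t -> f t <= f s].

(* If y < x with x maximising U/varphi and y maximising U/phi, then, since the
   maximal ratios are positive, U y <= (U x / varphi x) varphi y < U x because
   varphi y < varphi x, and symmetrically U x <= (U y / phi y) phi x < U y
   because phi x < phi y: a contradiction.  Only positivity and strict
   monotonicity of the two eigenfunctions enter. *)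
From mathcomp Require Import all_boot all_order all_algebra.
From mathcomp Require Import boolp classical_sets reals.
Set Implicit Arguments. Unset Strict Implicit.
Import Order.TTheory GRing.Theory Num.Theory.
Local Open Scope ring_scope.
Local Open Scope classical_set_scope.

Section ArgmaxRatio.
Variables (R : realType) (D : set R) (U w : R -> R).
Hypothesis w_gt0 : forall s, D s -> 0 < w s.

Lemma argmax_ratio_gt0 (x : R) :
  (exists2 z, D z & 0 < U z) -> argmax_on D (fun s => U s / w s) x ->
  0 < U x / w x.
Proof.
move=> [z Dz Uz] [_ Mx].
by apply: lt_le_trans (Mx z Dz); rewrite divr_gt0 ?w_gt0.
Qed.

Lemma argmax_ratio_lt (x y : R) :
  0 < U x / w x -> argmax_on D (fun s => U s / w s) x -> D y ->
  w y < w x -> U y < U x.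
Proof.
move=> ratio_gt0 [Dx Mx] Dy wyx.
have wK s : D s -> U s = U s / w s * w s by move=> Ds; rewrite divfK ?gt_eqF ?w_gt0.
rewrite (wK y Dy) (wK x Dx).
apply: le_lt_trans (_ : U x / w x * w y < _); last by rewrite ltr_pM2l.
by rewrite ler_pM2r ?w_gt0 ?Mx.
Qed.

End ArgmaxRatio.

Theorem lemma3p4 (R : realType) (Theta : Type)
  (intI : set R) (hI : interval_set intI)
  (x0 : R) (hx0 : intI x0)
  (rho : R) (hrho : 0 < rho)
  (varphi phi : R -> R)
  (hvarphi_pos : forall s, intI s -> 0 < varphi s)
  (hphi_pos : forall s, intI s -> 0 < phi s)
  (hvarphi_inc : forall a b, intI a -> intI b -> a < b -> varphi a < varphi b)
  (hphi_dec : forall a b, intI a -> intI b -> a < b -> phi b < phi a)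
  (hvarphi_x0 : varphi x0 = 1) (hphi_x0 : phi x0 = 1)
  (G Rc : R -> Theta -> R) (theta : Theta)
  (hU : exists xh, intI xh /\ 0 < G xh theta - Rc xh theta)
  (x y : R) :
  argmax_on intI (fun s => (G s theta - Rc s theta) / varphi s) x ->
  argmax_on intI (fun s => (G s theta - Rc s theta) / phi s) y ->
  x <= y.
Proof.
pose U s := G s theta - Rc s theta.
move=> Mx My; rewrite leNgt; apply/negP => yx.
have U_pos : exists2 z, intI z & 0 < U z by case: hU => z [? ?]; exists z.
have [Ix _] := Mx; have [Iy _] := My.
have Uyx : U y < U x.
  apply: (argmax_ratio_lt hvarphi_pos _ Mx Iy); last exact: hvarphi_inc.
  exact: (argmax_ratio_gt0 hvarphi_pos U_pos Mx).
have Uxy : U x < U y.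
  apply: (argmax_ratio_lt hphi_pos _ My Ix); last exact: hphi_dec.
  exact: (argmax_ratio_gt0 hphi_pos U_pos My).
by have := lt_trans Uyx Uxy; rewrite ltxx.
Qed.
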